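(* Under the hypotheses of Theorem 1 with $R(\delta\theta)=\|\delta\theta\|_1$ on $\mathbb{R}^{p^2}$, there is a constant $\eta_2>0$ such that with high probability $$\|\nabla\mathcal{L}(\delta\theta^*;\mathfrak{X}_1^{n_1},\mathfrak{X}_2^{n_2})\|_\infty\le\frac{\eta_2\sqrt{\log p}}{\sqrt{\min(n_1,n_2)}}.$$
   Context: Theorem 1 refers to: Ising models $P(\mathbf{x}\mid\theta)\propto\exp\{\langle\theta,T(\mathbf{x})\rangle\}$ on $\{-1,1\}^p$ with $T(\mathbf{x})=(x_sx_t)_{s,t=1}^p$; samples $\{\mathbf x^1_i\}_{i=1}^{n_1}$ i.i.d. from $P(\cdot\mid\theta_1^* )$ and $\{\mathbf x^2_i\}_{i=1}^{n_2}$ i.i.d. from $P(\cdot\mid\theta_2^* )$, independent; $\delta\theta^*=\theta_1^*-\theta_2^*$; $Z(\delta\theta)=E_{X\sim P(\cdot\mid\theta_2^* )}[\exp\{\langle T(X),\delta\theta\rangle\}]$, $r(\mathbf{x}\mid\delta\theta)=\exp\{\langle T(\mathbf{x}),\delta\theta\rangle\}/Z(\delta\theta)$; loss $\mathcal{L}(\delta\theta)=-\frac1{n_1}\sum_i\langle T(\mathbf x_i^1),\delta\theta\rangle+\log\frac1{n_2}\sum_i\exp\{\langle T(\mathbf x_i^2),\delta\theta\rangle\}$; smooth density ratio assumption: for all $\mathbf u$ with $\|\mathbf u\|_2\le\|\delta\theta^*\|_2$ and $\epsilon\in\mathbb R$, $E_{X\sim P(\cdot\mid\theta_2^* )}[\exp\{\epsilon(r(X\mid\delta\theta^*+\mathbf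 u)-1)\}]\le e^{\epsilon^2}$; and the eigenvalue bound $\frac12\lambda_{\max}(\nabla^2\mathcal{L}(\delta\theta^*+\mathbf u))\le\eta_0$ for all $\|\mathbf u\|_2\le\|\delta\theta^*\|_2$. *)

From Stdlib Require Import Reals ClassicalEpsilon.
From mathcomp Require Import all_boot.
Set Implicit Arguments. Unset Strict Implicit. Unset Printing Implicit Defensive.
Local Open Scope R_scope.

Definition rsum (T : finType) (f : T -> R) : R := \big[Rplus/0]_(x : T) f x.
Definition rprod (T : finType) (f : T -> R) : R := \big[Rmult/1]_(x : T) f x.

Definition ind (P : Prop) : R :=
  if excluded_middle_informative P then 1 else 0.

(* spin configurations x in {-1,1}^p; coordinate s is spin (x s) *)
Definition config (p : nat) := {ffun 'I_p -> bool}.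
Definition spin (b : bool) : R := if b then 1 else -1.

Definition param (p : nat) := 'I_p -> 'I_p -> R.

Definition suffT (p : nat) (x : config p) (s t : 'I_p) : R := spin (x s) * spin (x t).

Definition inner (p : nat) (th : param p) (x : config p) : R :=
  rsum (fun s : 'I_p => rsum (fun t : 'I_p => th s t * suffT x s t)).

Definition norm2 (p : nat) (u : param p) : R :=
  sqrt (rsum (fun s : 'I_p => rsum (fun t : 'I_p => u s t ^ 2))).

Definition padd (p : nat) (a b : param p) : param p := fun s t => a s t + b s t.
Definition psub (p : nat) (a b : param p) : param p := fun s t => a s t - b s t.
Definition pscale (p : nat) (h : R) (a : param p) : param p := fun s t => h * a s t.

Definition ebasis (p : nat) (s t : 'I_p) : param p :=
  fun s' t' => if (s' == s) && (t' == t) then 1 else 0.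

Definition ising (p : nat) (th : param p) (x : config p) : R :=
  exp (inner th x) / rsum (fun y : config p => exp (inner th y)).

Definition expect (p : nat) (th : param p) (f : config p -> R) : R :=
  rsum (fun x : config p => ising th x * f x).

Definition Zfun (p : nat) (th2 dth : param p) : R :=
  expect th2 (fun x => exp (inner dth x)).
Definition ratio (p : nat) (th2 dth : param p) (x : config p) : R :=
  exp (inner dth x) / Zfun th2 dth.

Definition sample (p n : nat) := {ffun 'I_n -> config p}.

Definition loss (p n1 n2 : nat) (X1 : sample p n1) (X2 : sample p n2)
  (dth : param p) : R :=
  - (/ INR n1) * rsum (fun i : 'I_n1 => inner dth (X1 i))
  + ln (/ INR n2 * rsum (fun i : 'I_n2 => exp (inner dth (X2 i)))).

Definition prob (p n1 n2 : nat) (th1 th2 : param p)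
  (E : sample p n1 -> sample p n2 -> Prop) : R :=
  rsum (fun X1 : sample p n1 => rsum (fun X2 : sample p n2 =>
    rprod (fun i : 'I_n1 => ising th1 (X1 i)) *
    rprod (fun j : 'I_n2 => ising th2 (X2 j)) * ind (E X1 X2))).

Definition smooth_density_ratio (p : nat) (th1 th2 : param p) : Prop :=
  forall (u : param p) (eps : R),
    norm2 u <= norm2 (psub th1 th2) ->
    expect th2 (fun x => exp (eps * (ratio th2 (padd (psub th1 th2) u) x - 1)))
      <= exp (eps ^ 2).

Definition second_deriv (f : R -> R) (a d2 : R) : Prop :=
  exists f' : R -> R,
    (forall h, derivable_pt_lim f h (f' h)) /\ derivable_pt_lim f' a d2.

(* "lambda_max(M) <= c" for the (symmetric) Hessian M of L at a point w,
   written via the Rayleigh quotient: v^T (Hess L)(w) v <= c ||v||_2^2 for all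
   v, where v^T (Hess L)(w) v is the second derivative of h |-> L(w + h v). *)
Definition hess_lambda_max_le (p : nat) (Lf : param p -> R) (w : param p) (c : R)
  : Prop :=
  forall (v : param p) (d2 : R),
    second_deriv (fun h => Lf (padd w (pscale h v))) 0 d2 -> d2 <= c * norm2 v ^ 2.

(* eigenvalue assumption of Theorem 1 (required for every sample realisation) *)
Definition eigen_bound (p n1 n2 : nat) (th1 th2 : param p) (eta0 : R) : Prop :=
  forall (X1 : sample p n1) (X2 : sample p n2) (u : param p),
    norm2 u <= norm2 (psub th1 th2) ->
    hess_lambda_max_le (loss X1 X2) (padd (psub th1 th2) u) (2 * eta0).

Definition grad_sup_le (p n1 n2 : nat) (X1 : sample p n1) (X2 : sample p n2)
  (dth : param p) (b : R) : Prop :=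
  forall s t : 'I_p, exists g : R,
    derivable_pt_lim (fun h => loss X1 X2 (padd dth (pscale h (ebasis s t)))) 0 g
    /\ Rabs g <= b.

(** The (s,t) partial derivative of the loss at [θ1 - θ2] is [-u/n1 + v/S], where
    [μ = E_θ1 T_st], [u = Σ_i (T_st(X1_i) - μ)], [v = Σ_j r(X2_j) (T_st(X2_j) - μ)]
    and [S = Σ_j r(X2_j)], with [r = P(.|θ1)/P(.|θ2)] the true density ratio.
    Both [u] and [v] are sums of i.i.d. centred variables (for [v] because
    [E_θ2 [r (T - μ)] = E_θ1 [T - μ] = 0]), and so is [n2 - S].  All three are
    sub-Gaussian: the spins are bounded and the smooth density ratio assumption,
    taken at the perturbation 0, controls the moments of [r].  Chernoff bounds
    and a union bound over the [p^2] coordinates give the rate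
    [√(log p / min(n1,n2))] with failure probability [5/p]; once this rate
    exceeds 4 the bound holds surely, since [|u| <= 2 n1] and [|v| <= 2 S]. *)

From Pilot Require Import Defs.
From Stdlib Require Import Reals Lra FunctionalExtensionality ClassicalEpsilon.
From HB Require Import structures.
From mathcomp Require Import all_boot.
Set Implicit Arguments. Unset Strict Implicit. Unset Printing Implicit Defensive.
Local Open Scope R_scope.

Lemma RplusA : associative Rplus. Proof. by move=> *; ring. Qed.
Lemma RmultA : associative Rmult. Proof. by move=> *; ring. Qed.
HB.instance Definition _ := Monoid.isComLaw.Build R 0 Rplus RplusA Rplus_comm Rplus_0_l.
HB.instance Definition _ := Monoid.isComLaw.Build R 1 Rmult RmultA Rmult_comm Rmult_1_l.
HB.instance Definition _ := Monoid.isMulLaw.Build R 0 Rmult Rmult_0_l Rmult_0_r.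
HB.instance Definition _ :=
  Monoid.isAddLaw.Build R Rmult Rplus Rmult_plus_distr_r Rmult_plus_distr_l.

Section RealBigops.
Variable T : finType.
Implicit Types f g : T -> R.

Lemma eq_rsum f g : (forall x, f x = g x) -> rsum f = rsum g.
Proof. by move=> fg; apply: eq_bigr. Qed.

Lemma rsumD f g : rsum (fun x => f x + g x) = rsum f + rsum g.
Proof. exact: big_split. Qed.

Lemma rsumZ c f : rsum (fun x => c * f x) = c * rsum f.
Proof. by rewrite /rsum -big_distrr. Qed.

Lemma rsumN f : rsum (fun x => - f x) = - rsum f.
Proof. by rewrite (@eq_rsum _ (fun x => -1 * f x)) ?rsumZ => *; ring. Qed.

Lemma rsumB f g : rsum (fun x => f x - g x) = rsum f - rsum g.
Proof. by rewrite /Rminus rsumD rsumN. Qed.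

Lemma rsum_const c : rsum (fun _ : T => c) = INR #|T| * c.
Proof.
rewrite /rsum big_const; elim: #|T| => [|n IH] /=; first lra.
by rewrite IH -/(INR n.+1) S_INR; ring.
Qed.

Lemma ler_rsum f g : (forall x, f x <= g x) -> rsum f <= rsum g.
Proof. by move=> fg; apply: (big_ind2 (fun a b => a <= b)) => // *; lra. Qed.

Lemma rsum_ge0 f : (forall x, 0 <= f x) -> 0 <= rsum f.
Proof. by move=> f0; have := @ler_rsum (fun _ => 0) f f0; rewrite /rsum big1. Qed.

Lemma rsum_ge_term f x0 : (forall x, 0 <= f x) -> f x0 <= rsum f.
Proof.
move=> f0; rewrite /rsum (bigD1 x0) //=.
suff : 0 <= \big[Rplus/0]_(i | i != x0) f i by lra.
by apply: (big_ind (fun a => 0 <= a)) => // *; lra.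
Qed.

Lemma Rabs_rsum_le f : Rabs (rsum f) <= rsum (fun x => Rabs (f x)).
Proof.
apply: (big_ind2 (fun a b => Rabs a <= b)) => [|a b c d ac bd|*]; last lra.
  by rewrite Rabs_R0; lra.
by apply: Rle_trans (Rabs_triang _ _) _; lra.
Qed.

Lemma rprodM f g : rprod (fun x => f x * g x) = rprod f * rprod g.
Proof. exact: big_split. Qed.

Lemma rprod_ge0 f : (forall x, 0 <= f x) -> 0 <= rprod f.
Proof.
by move=> f0; apply: (big_ind (fun a => 0 <= a)) => // [|*]; [lra | apply: Rmult_le_pos].
Qed.

Lemma exp_rsum f : exp (rsum f) = rprod (fun x => exp (f x)).
Proof.
rewrite /rsum /rprod; apply: (big_morph exp) => [x y|]; first by rewrite exp_plus.
by rewrite exp_0.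
Qed.

End RealBigops.

Lemma rsum_exchange (T1 T2 : finType) (f : T1 -> T2 -> R) :
  rsum (fun x => rsum (fun y => f x y)) = rsum (fun y => rsum (fun x => f x y)).
Proof. exact: exchange_big. Qed.

Lemma rsum_ord_const n c : rsum (fun _ : 'I_n => c) = INR n * c.
Proof. by rewrite rsum_const card_ord. Qed.

Lemma rprod_ord_const n c : rprod (fun _ : 'I_n => c) = c ^ n.
Proof. by rewrite /rprod big_const card_ord; elim: n => //= n ->. Qed.

Lemma rsum_ffun_rprod (T : finType) n (F : 'I_n -> T -> R) :
  rsum (fun X : {ffun 'I_n -> T} => rprod (fun i => F i (X i))) =
  rprod (fun i => rsum (F i)).
Proof. by rewrite /rsum /rprod bigA_distr_bigA. Qed.

Lemma ind_ge0 P : 0 <= Defs.ind P.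
Proof. by rewrite /Defs.ind; case: (excluded_middle_informative P) => /= _; lra. Qed.

Lemma ind_true (P : Prop) : P -> Defs.ind P = 1.
Proof. by rewrite /Defs.ind; case: (excluded_middle_informative P). Qed.

Lemma ind_false (P : Prop) : ~ P -> Defs.ind P = 0.
Proof. by rewrite /Defs.ind; case: (excluded_middle_informative P). Qed.

Lemma exp_le x y : x <= y -> exp x <= exp y.
Proof. by case/Rle_lt_or_eq_dec => [/exp_increasing|->]; lra. Qed.

Lemma exp_pow a n : exp a ^ n = exp (INR n * a).
Proof.
elim: n => [|n IH] /=; first by rewrite Rmult_0_l exp_0.
by rewrite IH -exp_plus -/(INR n.+1) S_INR; f_equal; ring.
Qed.

Lemma exp_neg_le_inv_pow x e k : 0 < x -> INR k * ln x <= e -> exp (- e) <= / x ^ k.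
Proof.
move=> x0 ke; rewrite -(exp_ln x) // exp_pow -exp_Ropp.
by apply: exp_le; lra.
Qed.

Lemma ind_gt_le_exp (S a l : R) : 0 <= l -> Defs.ind (S > a) <= exp (l * (S - a)).
Proof.
move=> l0; rewrite /Defs.ind; case: (excluded_middle_informative _) => /= Sa.
  by rewrite -exp_0; apply/exp_le/Rmult_le_pos; lra.
exact/Rlt_le/exp_pos.
Qed.

Lemma exp_le_second_order y : exp y <= 1 + y + y ^ 2 * exp (Rabs y).
Proof.
have ey : exp y <= 1 + y * exp y.
  have := exp_ineq1_le (- y); rewrite exp_Ropp => le_inv.
  have := Rmult_le_compat_l (exp y) _ _ (Rlt_le _ _ (exp_pos y)) le_inv.
  by rewrite Rinv_r; [nra | apply: Rgt_not_eq; apply: exp_pos].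
have := exp_ineq1_le y; case: (Rle_or_lt 0 y) => y0.
  by rewrite Rabs_right; [nra | lra].
have : 1 <= exp (- y) by rewrite -exp_0; apply: exp_le; lra.
by rewrite Rabs_left //; have := exp_pos y; nra.
Qed.

(* The linear term of [e^y <= 1 + y + y^2 e^|y|] vanishes because [Y] is centred. *)
Lemma mgf_le_of_centered (T : finType) (w Y B : T -> R) (M l : R) :
  (forall x, 0 <= w x) -> rsum w = 1 -> rsum (fun x => w x * Y x) = 0 ->
  (forall x, Y x ^ 2 * exp (Rabs (l * Y x)) <= B x) ->
  rsum (fun x => w x * B x) <= M ->
  rsum (fun x => w x * exp (l * Y x)) <= exp (l ^ 2 * M).
Proof.
move=> w0 w1 wY YB BM; have l2 : 0 <= l ^ 2 by nra.
apply: Rle_trans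
  (_ : rsum (fun x => w x + l * (w x * Y x) + l ^ 2 * (w x * B x)) <= _).
  apply: ler_rsum => x.
  have := Rmult_le_compat_l _ _ _ (w0 x) (exp_le_second_order (l * Y x)).
  have : (l * Y x) ^ 2 * exp (Rabs (l * Y x)) <= l ^ 2 * B x.
    rewrite (_ : (l * Y x) ^ 2 = l ^ 2 * Y x ^ 2); last ring.
    by rewrite Rmult_assoc; apply: Rmult_le_compat_l.
  by have := w0 x; nra.
rewrite !rsumD !rsumZ w1 wY; apply: Rle_trans (exp_ineq1_le _); nra.
Qed.

Section Chernoff.
Variables (T : finType) (n : nat) (w : T -> R) (K t : R).

Lemma chernoff_upper_tail (Y : T -> R) :
  (forall x, 0 <= w x) -> 0 < K -> 0 < t -> t <= 2 * K ->
  (forall l, Rabs l <= 1 -> rsum (fun x => w x * exp (l * Y x)) <= exp (K * l ^ 2)) ->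
  rsum (fun X : {ffun 'I_n -> T} => rprod (fun i => w (X i)) *
          Defs.ind (rsum (fun i => Y (X i)) > INR n * t))
  <= exp (- (INR n * t ^ 2 / (4 * K))).
Proof.
move=> w0 K0 t0 tK mgfY; pose l := t / (2 * K).
have l0 : 0 < l by apply: Rdiv_lt_0_compat; lra.
have l1 : l <= 1.
  by apply: (Rmult_le_reg_r (2 * K)); rewrite /l /Rdiv ?Rmult_assoc ?Rinv_l; lra.
apply: Rle_trans (_ : rsum (fun X : {ffun 'I_n -> T} => exp (- (l * (INR n * t))) *
   rprod (fun i => w (X i) * exp (l * Y (X i)))) <= _).
  apply: ler_rsum => X.
  rewrite rprodM -Rmult_assoc (Rmult_comm (exp _)) Rmult_assoc.
  apply: Rmult_le_compat_l; first exact: rprod_ge0.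
  rewrite -exp_rsum -exp_plus rsumZ.
  apply: Rle_trans (ind_gt_le_exp _ _ (Rlt_le _ _ l0)) _.
  by apply: exp_le; lra.
rewrite rsumZ (rsum_ffun_rprod (fun i x => w x * exp (l * Y x))) rprod_ord_const.
apply: Rle_trans (_ : exp (- (l * (INR n * t))) * exp (K * l ^ 2) ^ n <= _).
  apply/Rmult_le_compat_l/pow_incr; first exact/Rlt_le/exp_pos.
  split; last by apply: mgfY; rewrite Rabs_right; lra.
  by apply: rsum_ge0 => x; apply/Rmult_le_pos/Rlt_le/exp_pos.
by rewrite exp_pow -exp_plus; apply/exp_le/Req_le; rewrite /l; field; lra.
Qed.

Lemma chernoff_two_sided (Y : T -> R) :
  (forall x, 0 <= w x) -> 0 < K -> 0 < t -> t <= 2 * K ->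
  (forall l, Rabs l <= 1 -> rsum (fun x => w x * exp (l * Y x)) <= exp (K * l ^ 2)) ->
  rsum (fun X : {ffun 'I_n -> T} => rprod (fun i => w (X i)) *
          Defs.ind (Rabs (rsum (fun i => Y (X i))) > INR n * t))
  <= 2 * exp (- (INR n * t ^ 2 / (4 * K))).
Proof.
move=> w0 K0 t0 tK mgfY.
have mgfNY l : Rabs l <= 1 ->
    rsum (fun x => w x * exp (l * - Y x)) <= exp (K * l ^ 2).
  move=> l1; rewrite (@eq_rsum _ _ (fun x => w x * exp (- l * Y x))) => [|x].
    by rewrite (_ : l ^ 2 = (- l) ^ 2); [apply: mgfY; rewrite Rabs_Ropp | ring].
  by congr (_ * exp _); ring.
have up := chernoff_upper_tail w0 K0 t0 tK mgfY.
have lo := chernoff_upper_tail w0 K0 t0 tK mgfNY.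
apply: Rle_trans (_ : rsum (fun X : {ffun 'I_n -> T} =>
    rprod (fun i => w (X i)) * Defs.ind (rsum (fun i => Y (X i)) > INR n * t)
  + rprod (fun i => w (X i)) * Defs.ind (rsum (fun i => - Y (X i)) > INR n * t)) <= _);
  last by rewrite rsumD; apply: Rle_trans (Rplus_le_compat _ _ _ _ up lo) _; lra.
apply: ler_rsum => X; rewrite -Rmult_plus_distr_l.
apply: Rmult_le_compat_l; first exact: rprod_ge0.
rewrite (rsumN (fun i => Y (X i))); set S := rsum _.
have := ind_ge0 (S > INR n * t); have := ind_ge0 (- S > INR n * t).
case: (Rle_or_lt (Rabs S) (INR n * t)) => hS.
  by rewrite (ind_false (P := Rabs S > _)); lra.
rewrite (ind_true (P := Rabs S > _)); last lra.
case: (Rle_or_lt 0 S) => S0.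
  by rewrite Rabs_right in hS; [rewrite (ind_true (P := S > _)); lra | lra].
by rewrite Rabs_left in hS => //; rewrite (ind_true (P := - S > _)); lra.
Qed.

End Chernoff.

Lemma derivable_pt_lim_ext (f g : R -> R) x l :
  (forall h, f h = g h) -> derivable_pt_lim g x l -> derivable_pt_lim f x l.
Proof. by move=> fg; rewrite (functional_extensionality f g fg). Qed.

Lemma derivable_pt_lim_rsum (T : finType) (F : T -> R -> R) (d : T -> R) x :
  (forall i, derivable_pt_lim (F i) x (d i)) ->
  derivable_pt_lim (fun h => rsum (fun i => F i h)) x (rsum d).
Proof.
move=> dF; rewrite /rsum; elim: (index_enum T) => [|a r IH].
  apply: (derivable_pt_lim_ext (g := fct_cte 0)) => [h|]; first by rewrite big_nil.
  by rewrite big_nil; apply: derivable_pt_lim_const.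
apply: (derivable_pt_lim_ext
  (g := plus_fct (F a) (fun h => \big[Rplus/0]_(i <- r) F i h))) => [h|].
  by rewrite big_cons.
by rewrite big_cons; apply: derivable_pt_lim_plus.
Qed.

Lemma derivable_pt_lim_affine c a x : derivable_pt_lim (fun h => c + h * a) x a.
Proof.
apply: (derivable_pt_lim_ext (g := plus_fct (fct_cte c) (mult_real_fct a id))) => [h|].
  by rewrite /plus_fct /fct_cte /mult_real_fct /id; ring.
have := derivable_pt_lim_plus _ _ x _ _ (derivable_pt_lim_const c x)
  (derivable_pt_lim_scal id a x _ (derivable_pt_lim_id x)).
by rewrite Rplus_0_l Rmult_1_r.
Qed.

Lemma derivable_pt_lim_exp_affine c a x :
  derivable_pt_lim (fun h => exp (c + h * a)) x (a * exp (c + x * a)).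
Proof.
apply: (derivable_pt_lim_ext (g := comp exp (fun h => c + h * a))) => //.
rewrite Rmult_comm; apply: derivable_pt_lim_comp; first exact: derivable_pt_lim_affine.
exact: derivable_pt_lim_exp.
Qed.

Section IsingAlgebra.
Variable p : nat.
Implicit Types (th a b : param p) (x : config p).

Lemma inner_padd a b x : inner (padd a b) x = inner a x + inner b x.
Proof.
rewrite /inner -rsumD; apply: eq_rsum => s; rewrite -rsumD; apply: eq_rsum => t.
by rewrite /padd; ring.
Qed.

Lemma inner_psub a b x : inner (psub a b) x = inner a x - inner b x.
Proof.
rewrite /inner -rsumB; apply: eq_rsum => s; rewrite -rsumB; apply: eq_rsum => t.
by rewrite /psub; ring.
Qed.

Lemma inner_pscale h a x : inner (pscale h a) x = h * inner a x.
Proof.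
rewrite /inner -rsumZ; apply: eq_rsum => s; rewrite -rsumZ; apply: eq_rsum => t.
by rewrite /pscale; ring.
Qed.

Lemma inner_ebasis (s t : 'I_p) x : inner (ebasis s t) x = suffT x s t.
Proof.
rewrite /inner /rsum /ebasis (bigD1 s) //= (bigD1 t) //= eqxx /=.
rewrite big1 => [|t' /negbTE ->]; last ring.
rewrite big1 => [|s' /negbTE ->]; first by rewrite eqxx; ring.
by rewrite big1 //= => t' _; ring.
Qed.

Lemma Rabs_suffT_le1 x s t : Rabs (suffT x s t) <= 1.
Proof. by rewrite /suffT /spin; apply: Rabs_le; case: (x s); case: (x t); lra. Qed.

Definition partition th := rsum (fun y : config p => exp (inner th y)).

Lemma partition_gt0 th : 0 < partition th.
Proof.
pose y0 : config p := [ffun=> true].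
apply: Rlt_le_trans (exp_pos (inner th y0)) _.
by apply: (@rsum_ge_term _ (fun y => exp (inner th y)) y0) => y; apply/Rlt_le/exp_pos.
Qed.

Lemma ising_ge0 th x : 0 <= ising th x.
Proof. exact/Rlt_le/Rdiv_lt_0_compat/partition_gt0/exp_pos. Qed.

Lemma ising_sum1 th : rsum (ising th) = 1.
Proof.
rewrite (@eq_rsum _ _ (fun x => / partition th * exp (inner th x))) => [|x].
  by rewrite rsumZ Rinv_l //; apply/Rgt_not_eq/partition_gt0.
by rewrite /ising /Rdiv Rmult_comm.
Qed.

Definition density_ratio th1 th2 := ratio th2 (psub th1 th2).

Lemma Zfun_psub th1 th2 : Zfun th2 (psub th1 th2) = partition th1 / partition th2.
Proof.
rewrite /Zfun /expect /ising /Rdiv.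
rewrite (@eq_rsum _ _ (fun x => / partition th2 * exp (inner th1 x))) => [|x].
  by rewrite rsumZ Rmult_comm.
rewrite inner_psub (Rmult_comm (exp _)) Rmult_assoc -exp_plus.
by rewrite /partition; do 2 f_equal; ring.
Qed.

Lemma density_ratio_gt0 th1 th2 x : 0 < density_ratio th1 th2 x.
Proof.
rewrite /density_ratio /ratio Zfun_psub.
exact/Rdiv_lt_0_compat/Rdiv_lt_0_compat/partition_gt0/partition_gt0/exp_pos.
Qed.

Lemma ising_density_ratio th1 th2 x :
  ising th2 x * density_ratio th1 th2 x = ising th1 x.
Proof.
rewrite /density_ratio /ratio Zfun_psub /ising inner_psub.
have := partition_gt0 th1; have := partition_gt0 th2; rewrite /partition => p2 p1.
rewrite (_ : exp (inner th1 x) = exp (inner th2 x) * exp (inner th1 x - inner th2 x)).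
  by field; lra.
by rewrite -exp_plus; f_equal; ring.
Qed.

Definition mean_suffT th s t := expect th (fun x => suffT x s t).

Definition centered_suffT th s t x := suffT x s t - mean_suffT th s t.

Lemma Rabs_expect_le1 th (f : config p -> R) :
  (forall x, Rabs (f x) <= 1) -> Rabs (expect th f) <= 1.
Proof.
move=> f1; apply: Rle_trans (Rabs_rsum_le _) _; rewrite -(ising_sum1 th).
apply: ler_rsum => x; rewrite Rabs_mult Rabs_right; last exact/Rle_ge/ising_ge0.
by have := f1 x; have := ising_ge0 th x; nra.
Qed.

Lemma Rabs_centered_suffT_le2 th s t x : Rabs (centered_suffT th s t x) <= 2.
Proof.
apply: Rle_trans (Rabs_triang _ _) _; rewrite Rabs_Ropp.
have := Rabs_suffT_le1 x s t.
have := @Rabs_expect_le1 th (fun x => suffT x s t) (fun x => Rabs_suffT_le1 x s t).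
rewrite -/(mean_suffT th s t); lra.
Qed.

Lemma expect_centered_suffT th s t :
  rsum (fun x => ising th x * centered_suffT th s t x) = 0.
Proof.
rewrite (@eq_rsum _ _ (fun x => ising th x * suffT x s t - mean_suffT th s t * ising th x)).
  by rewrite rsumB rsumZ ising_sum1 Rmult_1_r; apply: Rminus_diag_eq.
by move=> x; rewrite /centered_suffT; ring.
Qed.

End IsingAlgebra.

(* The constant [4 e^20] is what the reweighted variable [r (T - μ)] needs:
   [4 r^2 e^(2r) <= 4 e^4 e^(4(r - 1))], and [E_θ2 e^(4(r - 1)) <= e^16]. *)
Definition Kc := 4 * exp 20.

Lemma Kc_ge1 : 1 <= Kc.
Proof.
have : 1 <= exp 20 by rewrite -exp_0; apply: exp_le; lra.
by rewrite /Kc; lra.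
Qed.

Section SubGaussian.
Variables (p : nat) (th1 th2 : param p).
Hypothesis smooth : smooth_density_ratio th1 th2.

Lemma smooth_density_ratio_mgf eps :
  rsum (fun x => ising th2 x * exp (eps * (density_ratio th1 th2 x - 1))) <= exp (eps ^ 2).
Proof.
have -> : density_ratio th1 th2 = ratio th2 (padd (psub th1 th2) (fun _ _ => 0)).
  congr ratio; do 2 (apply: functional_extensionality => ?).
  by rewrite /padd Rplus_0_r.
apply: smooth; rewrite {1}/norm2 (@eq_rsum _ _ (fun _ => 0)) => [|s].
  by rewrite /rsum big1 // sqrt_0; apply: sqrt_pos.
by rewrite /rsum big1 // => t _; ring.
Qed.

Lemma mgf_centered_suffT s t l : Rabs l <= 1 ->
  rsum (fun x => ising th1 x * exp (l * centered_suffT th1 s t x)) <= exp (Kc * l ^ 2).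
Proof.
move=> l1; apply: Rle_trans (_ : exp (l ^ 2 * (4 * exp 2)) <= _).
  apply: (mgf_le_of_centered (B := fun _ => 4 * exp 2)) => [x|||x|].
  - exact: ising_ge0.
  - exact: ising_sum1.
  - exact: expect_centered_suffT.
  - have := Rabs_centered_suffT_le2 th1 s t x; set Y := centered_suffT _ _ _ x => Y2.
    apply: Rmult_le_compat; [nra | exact/Rlt_le/exp_pos | |].
      by rewrite -(pow2_abs Y); have := Rabs_pos Y; nra.
    by apply: exp_le; rewrite Rabs_mult; have := Rabs_pos Y; have := Rabs_pos l; nra.
  - rewrite (@eq_rsum _ _ (fun x => (4 * exp 2) * ising th1 x)) => [|x]; last ring.
    by rewrite rsumZ ising_sum1; lra.
apply: exp_le; rewrite /Kc.
have : exp 2 <= exp 20 by apply: exp_le; lra.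
have : 0 <= l ^ 2 by nra.
nra.
Qed.

Lemma mgf_density_ratio l :
  rsum (fun x => ising th2 x * exp (l * (density_ratio th1 th2 x - 1)))
  <= exp (Kc * l ^ 2).
Proof.
apply: Rle_trans (smooth_density_ratio_mgf l) _; apply: exp_le.
have : 0 <= l ^ 2 by nra.
by have := Kc_ge1; nra.
Qed.

Lemma mgf_density_ratio_centered_suffT s t l : Rabs l <= 1 ->
  rsum (fun x => ising th2 x *
                 exp (l * (density_ratio th1 th2 x * centered_suffT th1 s t x)))
  <= exp (Kc * l ^ 2).
Proof.
move=> l1; set r := density_ratio th1 th2; rewrite Rmult_comm.
apply: (mgf_le_of_centered (B := fun x => 4 * exp 4 * exp (4 * (r x - 1))))
  => [x|||x|].
- exact: ising_ge0.
- exact: ising_sum1.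
- rewrite -(expect_centered_suffT th1 s t); apply: eq_rsum => x.
  by rewrite -Rmult_assoc ising_density_ratio.
- have := Rabs_centered_suffT_le2 th1 s t x; have r0 : 0 < r x := density_ratio_gt0 th1 th2 x.
  set Y := centered_suffT _ _ _ x => Y2.
  have rY : Rabs (r x * Y) <= 2 * r x
    by rewrite Rabs_mult Rabs_right; nra.
  have re : r x <= exp (r x) by have := exp_ineq1_le (r x); lra.
  rewrite (_ : 4 * exp 4 * exp (4 * (r x - 1)) =
               4 * (exp (r x) * exp (r x)) * exp (2 * r x)); last first.
    by rewrite !Rmult_assoc -!exp_plus; congr (_ * (_ * exp _)); ring.
  apply: Rmult_le_compat; [nra | exact/Rlt_le/exp_pos | |].
    by rewrite -(pow2_abs (r x * Y)); have := Rabs_pos (r x * Y); have := exp_pos (r x); nra.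
  apply: exp_le; rewrite Rabs_mult.
  by have := Rabs_pos (r x * Y); have := Rabs_pos l; nra.
- rewrite (@eq_rsum _ _ (fun x => (4 * exp 4) * (ising th2 x * exp (4 * (r x - 1)))))
    => [|x]; last ring.
  rewrite rsumZ; apply: Rle_trans (_ : 4 * exp 4 * exp (4 ^ 2) <= _).
    by apply: Rmult_le_compat_l; [have := exp_pos 4; lra | exact: smooth_density_ratio_mgf].
  by rewrite /Kc Rmult_assoc -exp_plus; apply: Req_le; congr (_ * exp _); ring.
Qed.

End SubGaussian.

Lemma rsum_exp_gt0 n (f : 'I_n -> R) : (0 < n)%nat -> 0 < rsum (fun i => exp (f i)).
Proof.
move=> n0; apply: Rlt_le_trans (exp_pos (f (Ordinal n0))) _.
by apply: (@rsum_ge_term _ (fun i => exp (f i))) => i; apply/Rlt_le/exp_pos.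
Qed.

Lemma Rabs_div_le u N c : 0 < N -> Rabs u <= N * c -> Rabs (u / N) <= c.
Proof.
move=> N0 uc; rewrite Rabs_mult Rabs_inv (Rabs_right N); last lra.
by apply: (Rmult_le_reg_r N) => //; rewrite Rmult_assoc Rinv_l; lra.
Qed.

Section Gradient.
Variables (p n1 n2 : nat) (X1 : sample p n1) (X2 : sample p n2).
Hypotheses (n1_gt0 : (0 < n1)%nat) (n2_gt0 : (0 < n2)%nat).

Lemma loss_partial_deriv (d : param p) s t :
  derivable_pt_lim (fun h => loss X1 X2 (padd d (pscale h (ebasis s t)))) 0
    (- / INR n1 * rsum (fun i => suffT (X1 i) s t) +
     rsum (fun i => suffT (X2 i) s t * exp (inner d (X2 i))) /
     rsum (fun i => exp (inner d (X2 i)))).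
Proof.
have n1R : 0 < INR n1 by apply/lt_0_INR/ltP.
have n2R : 0 < INR n2 by apply/lt_0_INR/ltP.
pose e2 h i := exp (inner d (X2 i) + h * suffT (X2 i) s t).
pose F h := / INR n2 * rsum (e2 h).
have e2_0 : e2 0 = fun i => exp (inner d (X2 i)).
  by apply: functional_extensionality => i; rewrite /e2 Rmult_0_l Rplus_0_r.
have A0 : 0 < rsum (e2 0) by rewrite e2_0; apply: rsum_exp_gt0.
have dF : derivable_pt_lim F 0
    (/ INR n2 * rsum (fun i => suffT (X2 i) s t * exp (inner d (X2 i)))).
  apply: (derivable_pt_lim_ext (g := mult_real_fct (/ INR n2) (fun h => rsum (e2 h))))
    => //; apply: derivable_pt_lim_scal.
  have -> : (fun i => suffT (X2 i) s t * exp (inner d (X2 i))) =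
            (fun i => suffT (X2 i) s t * exp (inner d (X2 i) + 0 * suffT (X2 i) s t)).
    by apply: functional_extensionality => i; rewrite Rmult_0_l Rplus_0_r.
  apply: (derivable_pt_lim_rsum (F := fun i h => e2 h i)) => i.
  exact: derivable_pt_lim_exp_affine.
have dlnF := derivable_pt_lim_comp _ _ _ _ _ dF
  (derivable_pt_lim_ln _ (Rmult_lt_0_compat _ _ (Rinv_0_lt_compat _ n2R) A0)).
have dlin : derivable_pt_lim
    (fun h => - / INR n1 * rsum (fun i => inner d (X1 i) + h * suffT (X1 i) s t)) 0
    (- / INR n1 * rsum (fun i => suffT (X1 i) s t)).
  apply: (derivable_pt_lim_ext (g := mult_real_fct (- / INR n1)
     (fun h => rsum (fun i => inner d (X1 i) + h * suffT (X1 i) s t)))) => //.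
  apply/derivable_pt_lim_scal/derivable_pt_lim_rsum => i.
  exact: derivable_pt_lim_affine.
apply: (derivable_pt_lim_ext (g := plus_fct
   (fun h => - / INR n1 * rsum (fun i => inner d (X1 i) + h * suffT (X1 i) s t))
   (comp ln F))) => [h|].
  rewrite /loss /plus_fct /comp /F /e2.
  by congr (_ * _ + ln (_ * _)); apply: eq_rsum => i;
    rewrite inner_padd inner_pscale inner_ebasis.
move: (derivable_pt_lim_plus _ _ _ _ _ dlin dlnF); rewrite /F e2_0 in A0 *.
congr derivable_pt_lim; move: A0; set A := rsum _ => A0.
by field; lra.
Qed.

Variables (th1 th2 : param p) (s t : 'I_p).

Let r := density_ratio th1 th2.
Let dev1 := rsum (fun i => centered_suffT th1 s t (X1 i)).
Let dev2 := rsum (fun i => r (X2 i) * centered_suffT th1 s t (X2 i)).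
Let mass2 := rsum (fun i => r (X2 i)).

Lemma mass2_gt0 : 0 < mass2.
Proof.
apply: Rlt_le_trans (density_ratio_gt0 th1 th2 (X2 (Ordinal n2_gt0))) _.
by apply: (@rsum_ge_term _ (fun i => r (X2 i))) => i; apply/Rlt_le/density_ratio_gt0.
Qed.

(* Dividing numerator and denominator of the second term by [Z(θ1 - θ2)] turns
   the exponential weights into density ratios. *)
Lemma loss_partial_deriv_centered :
  derivable_pt_lim
    (fun h => loss X1 X2 (padd (psub th1 th2) (pscale h (ebasis s t)))) 0
    (- (dev1 / INR n1) + dev2 / mass2).
Proof.
have n1R : 0 < INR n1 by apply/lt_0_INR/ltP.
have Z0 := Zfun_psub th1 th2; set Z := Zfun th2 (psub th1 th2) in Z0.
have Zpos : 0 < Z by rewrite Z0; apply/Rdiv_lt_0_compat/partition_gt0/partition_gt0.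
have A0 := @rsum_exp_gt0 _ (fun i => inner (psub th1 th2) (X2 i)) n2_gt0.
set A := rsum (fun i => exp _) in A0.
set B := rsum (fun i => suffT (X2 i) s t * exp (inner (psub th1 th2) (X2 i))).
have mass2E : mass2 = / Z * A.
  by rewrite -rsumZ; apply: eq_rsum => i; rewrite /r /density_ratio /ratio -/Z /Rdiv; ring.
have dev1E : dev1 = rsum (fun i => suffT (X1 i) s t) - INR n1 * mean_suffT th1 s t.
  by rewrite /dev1 /centered_suffT rsumB rsum_ord_const.
have dev2E : dev2 = / Z * B - mean_suffT th1 s t * mass2.
  rewrite /dev2 /mass2 -!rsumZ -rsumB; apply: eq_rsum => i.
  by rewrite /r /density_ratio /ratio /centered_suffT -/Z /Rdiv; ring.
have := loss_partial_deriv (psub th1 th2) s t; rewrite -/A -/B.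
by congr derivable_pt_lim; rewrite dev2E dev1E mass2E; field; lra.
Qed.

Lemma loss_partial_deriv_le b :
  Rabs dev1 <= INR n1 * (b / 2) -> Rabs dev2 <= mass2 * (b / 2) ->
  exists g, derivable_pt_lim
      (fun h => loss X1 X2 (padd (psub th1 th2) (pscale h (ebasis s t)))) 0 g
    /\ Rabs g <= b.
Proof.
have n1R : 0 < INR n1 by apply/lt_0_INR/ltP.
have m0 := mass2_gt0.
move=> dev1b dev2b; exists (- (dev1 / INR n1) + dev2 / mass2).
split; first exact: loss_partial_deriv_centered.
apply: Rle_trans (Rabs_triang _ _) _; rewrite Rabs_Ropp.
by have := Rabs_div_le n1R dev1b; have := Rabs_div_le m0 dev2b; lra.
Qed.

End Gradient.

Lemma product_prob_ge (T1 T2 : finType) (P1 : T1 -> R) (P2 : T2 -> R)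
    (E : T1 -> T2 -> Prop) (G1 : T1 -> R) (G2 : T2 -> R) :
  (forall x, 0 <= P1 x) -> (forall y, 0 <= P2 y) -> rsum P1 = 1 -> rsum P2 = 1 ->
  (forall x y, 1 - G1 x - G2 y <= Defs.ind (E x y)) ->
  1 - rsum (fun x => P1 x * G1 x) - rsum (fun y => P2 y * G2 y) <=
  rsum (fun x => rsum (fun y => P1 x * P2 y * Defs.ind (E x y))).
Proof.
move=> P1_0 P2_0 P1_1 P2_1 GE.
apply: Rle_trans
  (_ : rsum (fun x => rsum (fun y => P1 x * P2 y * (1 - G1 x - G2 y))) <= _); last first.
  by apply/ler_rsum => x; apply/ler_rsum => y; apply/Rmult_le_compat_l/GE/Rmult_le_pos.
set Q := rsum (fun y => P2 y * G2 y).
have inner_sum x : rsum (fun y => P1 x * P2 y * (1 - G1 x - G2 y)) =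
                   (1 - Q) * P1 x - P1 x * G1 x.
  rewrite (@eq_rsum _ _ (fun y => (P1 x * (1 - G1 x)) * P2 y - P1 x * (P2 y * G2 y))).
    by rewrite rsumB !rsumZ P2_1 -/Q; ring.
  by move=> y; ring.
by rewrite (eq_rsum inner_sum) rsumB rsumZ P1_1; apply: Req_le; ring.
Qed.

Lemma ind_le_rsum2 p (P : 'I_p -> 'I_p -> Prop) s t :
  Defs.ind (P s t) <= rsum (fun s => rsum (fun t => Defs.ind (P s t))).
Proof.
apply: Rle_trans (_ : rsum (fun t => Defs.ind (P s t)) <= _).
  by apply: (@rsum_ge_term _ (fun t => Defs.ind (P s t))) => t'; apply: ind_ge0.
apply: (@rsum_ge_term _ (fun s => rsum (fun t => Defs.ind (P s t)))) => s'.
by apply: rsum_ge0 => t'; apply: ind_ge0.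
Qed.

Lemma expect_rsum2_le (T : finType) p (P : T -> R) (f : 'I_p -> 'I_p -> T -> R) c :
  (forall x, 0 <= P x) -> (forall s t, rsum (fun x => P x * f s t x) <= c) ->
  rsum (fun x => P x * rsum (fun s => rsum (fun t => f s t x))) <= INR p * (INR p * c).
Proof.
move=> P0 fc.
rewrite (@eq_rsum _ _ (fun x => rsum (fun s => rsum (fun t => P x * f s t x)))) => [|x].
  rewrite rsum_exchange -!rsum_ord_const; apply: ler_rsum => s.
  by rewrite rsum_exchange; apply: ler_rsum => t; apply: fc.
by rewrite -rsumZ; apply: eq_rsum => s; rewrite -rsumZ.
Qed.

Lemma iid_law_ge0 p n (th : param p) (X : sample p n) : 0 <= rprod (fun i => ising th (X i)).
Proof. by apply: rprod_ge0 => i; apply: ising_ge0. Qed.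

Lemma iid_law_sum1 p n (th : param p) :
  rsum (fun X : sample p n => rprod (fun i => ising th (X i))) = 1.
Proof.
by rewrite (rsum_ffun_rprod (fun _ x => ising th x)) rprod_ord_const ising_sum1 pow1.
Qed.

Lemma prob_forall p n1 n2 (th1 th2 : param p) (E : sample p n1 -> sample p n2 -> Prop) :
  (forall X1 X2, E X1 X2) -> prob th1 th2 E = 1.
Proof.
move=> allE; rewrite /prob -[RHS](iid_law_sum1 n1 th1); apply: eq_rsum => X1.
rewrite -[RHS]Rmult_1_r -(iid_law_sum1 n2 th2) -rsumZ; apply: eq_rsum => X2.
by rewrite ind_true // Rmult_1_r.
Qed.

Section Concentration.
Variables (p n1 n2 : nat) (th1 th2 : param p) (b : R).
Hypotheses (n1_gt0 : (0 < n1)%nat) (n2_gt0 : (0 < n2)%nat).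

Let r := density_ratio th1 th2.

Definition deviation1 s t (X1 : sample p n1) :=
  Rabs (rsum (fun i => centered_suffT th1 s t (X1 i))) > INR n1 * (b / 2).
Definition deviation2 s t (X2 : sample p n2) :=
  Rabs (rsum (fun i => r (X2 i) * centered_suffT th1 s t (X2 i))) > INR n2 * (b / 4).
Definition low_ratio_mass (X2 : sample p n2) :=
  rsum (fun i => 1 - r (X2 i)) > INR n2 * / 2.

Definition failures1 X1 := rsum (fun s => rsum (fun t => Defs.ind (deviation1 s t X1))).
Definition failures2 X2 :=
  rsum (fun s => rsum (fun t => Defs.ind (deviation2 s t X2))) + Defs.ind (low_ratio_mass X2).

Lemma grad_sup_le_of_concentration X1 X2 :
  (forall s t, ~ deviation1 s t X1 /\ ~ deviation2 s t X2) -> ~ low_ratio_mass X2 ->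
  grad_sup_le X1 X2 (psub th1 th2) b.
Proof.
move=> dev mass s t; have [/Rnot_gt_le dev1 /Rnot_gt_le dev2] := dev s t.
have n1R : 0 < INR n1 by apply/lt_0_INR/ltP.
have n2R : 0 < INR n2 by apply/lt_0_INR/ltP.
move/Rnot_gt_le: mass; rewrite rsumB rsum_ord_const Rmult_1_r => mass.
have b0 : 0 <= b by have := Rabs_pos (rsum (fun i => centered_suffT th1 s t (X1 i))); nra.
apply: loss_partial_deriv_le => //; rewrite -/r; nra.
Qed.

Lemma one_sub_failures_le_ind X1 X2 :
  1 - failures1 X1 - failures2 X2 <= Defs.ind (grad_sup_le X1 X2 (psub th1 th2) b).
Proof.
have failures1_0 : 0 <= failures1 X1 by apply: rsum_ge0 => s; apply: rsum_ge0 => t; apply: ind_ge0.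
have dev2_0 : 0 <= rsum (fun s => rsum (fun t => Defs.ind (deviation2 s t X2))).
  by apply: rsum_ge0 => s; apply: rsum_ge0 => t; apply: ind_ge0.
have := ind_ge0 (low_ratio_mass X2); have := ind_ge0 (grad_sup_le X1 X2 (psub th1 th2) b).
rewrite /failures2; case: (classic (low_ratio_mass X2)) => [/ind_true -> | mass]; first lra.
case: (classic (exists s t, deviation1 s t X1 \/ deviation2 s t X2)).
  move=> [s [t [/ind_true dev | /ind_true dev]]].
    by have := ind_le_rsum2 (fun s t => deviation1 s t X1) s t; rewrite /failures1; lra.
  by have := ind_le_rsum2 (fun s t => deviation2 s t X2) s t; lra.
move=> no_dev; rewrite ind_true; first lra.
apply: grad_sup_le_of_concentration => // s t.
by split => dev; apply: no_dev; exists s, t; [left | right].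
Qed.

Lemma grad_sup_le_of_ge4 (X1 : sample p n1) (X2 : sample p n2) :
  4 <= b -> grad_sup_le X1 X2 (psub th1 th2) b.
Proof.
move=> b4 s t; apply: loss_partial_deriv_le => //.
  apply: Rle_trans (Rabs_rsum_le _) _.
  rewrite -rsum_ord_const; apply: ler_rsum => i.
  by have := Rabs_centered_suffT_le2 th1 s t (X1 i); lra.
apply: Rle_trans (Rabs_rsum_le _) _; rewrite Rmult_comm -rsumZ; apply: ler_rsum => i.
have := Rabs_centered_suffT_le2 th1 s t (X2 i); have r0 := density_ratio_gt0 th1 th2 (X2 i).
by rewrite Rabs_mult (Rabs_right (density_ratio th1 th2 (X2 i))); nra.
Qed.

Hypothesis smooth : smooth_density_ratio th1 th2.
Hypotheses (b_gt0 : 0 < b) (b_lt4 : b < 4).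

Lemma expect_failures1_le :
  rsum (fun X1 : sample p n1 => rprod (fun i => ising th1 (X1 i)) * failures1 X1)
  <= INR p * (INR p * (2 * exp (- (INR n1 * (b / 2) ^ 2 / (4 * Kc))))).
Proof.
have K1 := Kc_ge1.
apply: expect_rsum2_le => [X|s t]; first exact: iid_law_ge0.
by apply: (@chernoff_two_sided _ _ (ising th1));
  [exact: ising_ge0 | lra | lra | lra | exact: mgf_centered_suffT].
Qed.

Lemma expect_failures2_le :
  rsum (fun X2 : sample p n2 => rprod (fun i => ising th2 (X2 i)) * failures2 X2)
  <= INR p * (INR p * (2 * exp (- (INR n2 * (b / 4) ^ 2 / (4 * Kc)))))
     + exp (- (INR n2 * (/ 2) ^ 2 / (4 * Kc))).
Proof.
have K1 := Kc_ge1.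
rewrite /failures2 (@eq_rsum _ _ (fun X2 : sample p n2 =>
    rprod (fun i => ising th2 (X2 i)) *
      rsum (fun s => rsum (fun t => Defs.ind (deviation2 s t X2)))
  + rprod (fun i => ising th2 (X2 i)) * Defs.ind (low_ratio_mass X2))) => [|X2]; last ring.
rewrite rsumD; apply: Rplus_le_compat.
  apply: expect_rsum2_le => [X|s t]; first exact: iid_law_ge0.
  by apply: (@chernoff_two_sided _ _ (ising th2) _ _
                (fun x => r x * centered_suffT th1 s t x));
    [exact: ising_ge0 | lra | lra | lra | exact: mgf_density_ratio_centered_suffT].
apply: (@chernoff_upper_tail _ _ (ising th2) _ _ (fun x => 1 - r x));
  [exact: ising_ge0 | lra | lra | lra |].
move=> l _; rewrite (@eq_rsum _ _ (fun x => ising th2 x * exp (- l * (r x - 1)))) => [|x].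
  by rewrite (_ : l ^ 2 = (- l) ^ 2); [apply: mgf_density_ratio | ring].
by congr (_ * exp _); ring.
Qed.

Lemma prob_grad_sup_le_ge :
  1 - INR p * (INR p * (2 * exp (- (INR n1 * (b / 2) ^ 2 / (4 * Kc)))))
    - (INR p * (INR p * (2 * exp (- (INR n2 * (b / 4) ^ 2 / (4 * Kc)))))
       + exp (- (INR n2 * (/ 2) ^ 2 / (4 * Kc))))
  <= @prob p n1 n2 th1 th2 (fun X1 X2 => grad_sup_le X1 X2 (psub th1 th2) b).
Proof.
apply: Rle_trans (product_prob_ge _ _ _ _ one_sub_failures_le_ind); last first.
- exact: iid_law_sum1.
- exact: iid_law_sum1.
- exact: iid_law_ge0.
- exact: iid_law_ge0.
apply/Rplus_le_compat/Ropp_le_contravar/expect_failures2_le.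
exact/Rplus_le_compat_l/Ropp_le_contravar/expect_failures1_le.
Qed.

End Concentration.

Lemma prob_ge0 p n1 n2 (th1 th2 : param p) (E : sample p n1 -> sample p n2 -> Prop) :
  0 <= prob th1 th2 E.
Proof.
apply: rsum_ge0 => X1; apply: rsum_ge0 => X2; apply/Rmult_le_pos/ind_ge0.
exact/Rmult_le_pos/iid_law_ge0/iid_law_ge0.
Qed.

Lemma le_div_of_mul_le a c d : 0 < d -> a * d <= c -> a <= c / d.
Proof.
by move=> d0 adc; apply: (Rmult_le_reg_r d) => //; rewrite /Rdiv Rmult_assoc Rinv_l; lra.
Qed.

Lemma deviation_exponent_ge L m n b c :
  0 <= L -> m <= n -> b ^ 2 * m = (16 * Kc) ^ 2 * L -> 0 < c <= 4 ->
  3 * L <= n * (b / c) ^ 2 / (4 * Kc).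
Proof.
move=> L0 mn rate c4; have K1 := Kc_ge1.
rewrite (_ : n * (b / c) ^ 2 / (4 * Kc) = n * b ^ 2 / (4 * Kc * c ^ 2)); last by field; lra.
apply: le_div_of_mul_le; first nra.
have : m * b ^ 2 <= n * b ^ 2 by nra.
have : 0 <= Kc * L * (16 - c ^ 2) by apply: Rmult_le_pos; nra.
have : 0 <= Kc * L * (256 * Kc - 192) by apply: Rmult_le_pos; nra.
nra.
Qed.

Lemma low_mass_exponent_ge L m n b :
  0 <= L -> 0 <= m -> m <= n -> b ^ 2 * m = (16 * Kc) ^ 2 * L -> b ^ 2 <= 16 ->
  L <= n * (/ 2) ^ 2 / (4 * Kc).
Proof.
move=> L0 m0 mn rate b16; have K1 := Kc_ge1; apply: le_div_of_mul_le; first lra.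
have : 0 <= Kc * L * (Kc - 1) by apply: Rmult_le_pos; nra.
nra.
Qed.

Lemma union_budget x e1 e2 e3 :
  1 <= x -> e1 <= / x ^ 3 -> e2 <= / x ^ 3 -> e3 <= / x ^ 1 ->
  x * (x * (2 * e1)) + (x * (x * (2 * e2)) + e3) <= 5 / x.
Proof.
move=> x1 e1x e2x; rewrite pow_1 => e3x; have xx : 0 <= x * x by nra.
have := Rmult_le_compat_l _ _ _ xx e1x; have := Rmult_le_compat_l _ _ _ xx e2x.
have -> : x * x * / x ^ 3 = / x by field; lra.
have -> : 5 / x = 2 * / x + 2 * / x + / x by field; lra.
lra.
Qed.

Lemma sqr_rate c L m : 0 <= L -> 0 < m -> (c * sqrt L / sqrt m) ^ 2 * m = c ^ 2 * L.
Proof.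
move=> L0 m0; rewrite /Rdiv !Rpow_mult_distr pow_inv !pow2_sqrt; try lra.
by field; lra.
Qed.

Lemma failure_budget_le p n1 n2 m b :
  1 < p -> 0 <= m -> m <= n1 -> m <= n2 -> b ^ 2 * m = (16 * Kc) ^ 2 * ln p ->
  0 < b < 4 ->
  1 - 5 / p <=
  1 - p * (p * (2 * exp (- (n1 * (b / 2) ^ 2 / (4 * Kc)))))
    - (p * (p * (2 * exp (- (n2 * (b / 4) ^ 2 / (4 * Kc)))))
       + exp (- (n2 * (/ 2) ^ 2 / (4 * Kc)))).
Proof.
move=> p1 m0 m_n1 m_n2 rate b4.
have L0 : 0 <= ln p by rewrite -ln_1; apply/Rlt_le/ln_increasing; lra.
have tail k e : INR k * ln p <= e -> exp (- e) <= / p ^ k.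
  by move=> ke; apply: exp_neg_le_inv_pow => //; lra.
have e1 := deviation_exponent_ge L0 m_n1 rate (ltac:(lra) : 0 < 2 <= 4).
have e2 := deviation_exponent_ge L0 m_n2 rate (ltac:(lra) : 0 < 4 <= 4).
have e3 := low_mass_exponent_ge L0 m0 m_n2 rate (ltac:(nra) : b ^ 2 <= 16).
suff : p * (p * (2 * exp (- (n1 * (b / 2) ^ 2 / (4 * Kc)))))
  + (p * (p * (2 * exp (- (n2 * (b / 4) ^ 2 / (4 * Kc))))) + exp (- (n2 * (/ 2) ^ 2 / (4 * Kc))))
  <= 5 / p by lra.
by apply: union_budget; [lra | apply: tail => /=; lra ..].
Qed.

Theorem corollary1 :
  exists eta2 c : R, 0 < eta2 /\ 0 < c /\
  forall (p n1 n2 : nat) (th1 th2 : param p) (eta0 : R),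
    (1 <= p)%nat -> (1 <= n1)%nat -> (1 <= n2)%nat ->
    smooth_density_ratio th1 th2 ->
    eigen_bound n1 n2 th1 th2 eta0 ->
    1 - c / INR p <=
      @prob p n1 n2 th1 th2 (fun X1 X2 =>
        grad_sup_le X1 X2 (psub th1 th2)
          (eta2 * sqrt (ln (INR p)) / sqrt (INR (minn n1 n2)))).
Proof.
have K1 := Kc_ge1.
exists (16 * Kc), 5; split; first lra; split; first lra.
move=> p n1 n2 th1 th2 eta0 p1 n1_gt0 n2_gt0 smooth _.
set m := minn n1 n2; set b := _ / sqrt (INR m).
have mR : 1 <= INR m by apply: (le_INR 1); apply/leP; rewrite leq_min n1_gt0.
have [m_n1 m_n2] : INR m <= INR n1 /\ INR m <= INR n2.
  by split; apply/le_INR/leP; [apply: geq_minl | apply: geq_minr].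
case: (Rle_or_lt (INR p) 1) => [p_le1 | p_gt1].
  have prob0 := @prob_ge0 p n1 n2 th1 th2 (fun X1 X2 => grad_sup_le X1 X2 (psub th1 th2) b).
  have pR : 1 <= INR p by apply: (le_INR 1); apply/leP.
  by rewrite (_ : INR p = 1); lra.
have L0 : 0 < ln (INR p) by rewrite -ln_1; apply: ln_increasing; lra.
have rate : b ^ 2 * INR m = (16 * Kc) ^ 2 * ln (INR p) by apply: sqr_rate; lra.
case: (Rle_or_lt 4 b) => [b4 | b4].
  rewrite prob_forall => [|X1 X2]; last exact: grad_sup_le_of_ge4.
  have : 0 < 5 / INR p by apply: Rdiv_lt_0_compat; lra.
  lra.
have b0 : 0 < b.
  apply: Rdiv_lt_0_compat; last by apply: sqrt_lt_R0; lra.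
  by apply: Rmult_lt_0_compat; [lra | apply: sqrt_lt_R0].
apply: Rle_trans (prob_grad_sup_le_ge n1_gt0 n2_gt0 smooth b0 b4).
by apply: (@failure_budget_le _ _ _ (INR m)); lra.
Qed.
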